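(* Let $f_1,\dots,f_n$ be convex and differentiable with $\|\nabla f_i(x)-\nabla f_i(y)\|\le L\|x-y\|$, $f=\frac1n\sum_if_i$. Fix $x,\tilde x\in\mathbb{R}^d$, integers $N,B\ge1$, $b\ge2$ and $\lambda\in(0,1]$. For each worker $i=1,\dots,N$ draw $B$ indices independently and uniformly from $\{1,\dots,n\}$ (independently across workers), forming $I^i$, let $u^i=\frac1B\sum_{a\in I^i}[\nabla f_a(x)-\nabla f_a(\tilde x)]$, $\delta^i=\frac{\lambda\|u^i\|_\infty}{2^{b-1}-1}$, and $v=\frac1N\sum_{i=1}^NQ_{(\delta^i,b)}(u^i)+\nabla f(\tilde x)$ (quantization roundings independent given the indices). Let $d_\lambda\ge0$ be such that almost surely, for each $i$, the number of coordinates of $u^i$ outside $[-2^{b-1}\delta^i,(2^{b-1}-1)\delta^i]$ is at most $d_\lambda$. Let $\zeta=\frac{d\lambda^2}{4(2^{b-1}-1)^2}+d_\lambda(1-\lambda)^2+\frac{1}{NB}$. Then $$\mathbf{E}\|v-\nabla f(x)\|^2\le 4L\zeta\,\big[f(\tilde x)-f(x)-\langle\nabla f(x),\tilde x-x\rangle\big].$$ Moreover, if $J$ is a further multiset of $B$ indices drawn independently and uniformly from $\{1,\dots,n\}$, independently of everything else, and $\hat v=\frac1B\sum_{j\in J}[\nabla f_j(x)-\nabla f_j(\tilde x)]+\nabla f(\tilde x)$, then $$\mathbf{E}\|\hat v-v\|^2\le 4L\Big[\frac{1}{2B}+\frac{d\lambda^2}{4(2^{b-1}-1)^2}+d_\lambda(1-\lambda)^2+\frac{1}{NB}\Big]\big[f(\tilde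 x)-f(x)-\langle\nabla f(x),\tilde x-x\rangle\big].$$
   Context: Quantization: for an integer $b\ge2$ and $\delta>0$, $\mathrm{dom}(\delta,b)=\{k\delta:k\in\mathbb{Z},-2^{b-1}\le k\le 2^{b-1}-1\}$; the scalar quantizer $Q_{(\delta,b)}(y)$, for $y\in[-2^{b-1}\delta,(2^{b-1}-1)\delta]$ with $z$ the largest grid point $\le y$, equals $z$ with probability $\frac{z+\delta-y}{\delta}$ and $z+\delta$ otherwise; for $y$ outside this interval it equals the nearest grid point. On vectors it acts coordinatewise with independent randomness; if $\delta=0$ (only when the vector is $0$) the output is $0$. $\|\cdot\|_\infty$ is the max norm. *)

(* Stdlib (classical reals R). Vectors of R^d are functions nat -> R,
   of which only the coordinates 0..d-1 are used. *)
From Stdlib Require Import Reals List Arith.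
Open Scope R_scope.

Fixpoint fsum (n : nat) (f : nat -> R) : R :=
  match n with O => 0 | S n' => fsum n' f + f n' end.

Definition vsub (u v : nat -> R) : nat -> R := fun k => u k - v k.
Definition inner (d : nat) (u v : nat -> R) : R := fsum d (fun k => u k * v k).
Definition norm (d : nat) (u : nat -> R) : R := sqrt (fsum d (fun k => u k ^ 2)).
Fixpoint ninf (d : nat) (u : nat -> R) : R :=
  match d with O => 0 | S d' => Rmax (ninf d' u) (Rabs (u d')) end.

Definition convex_on (f : (nat -> R) -> R) : Prop :=
  forall (x y : nat -> R) (t : R), 0 <= t <= 1 ->
    f (fun k => t * x k + (1 - t) * y k) <= t * f x + (1 - t) * f y.

Definition has_gradient (d : nat) (f : (nat -> R) -> R) (g : (nat -> R) -> (nat -> R)) : Prop :=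
  forall x : nat -> R, forall eps : R, 0 < eps -> exists delta : R, 0 < delta /\
    forall y : nat -> R, norm d (vsub y x) < delta ->
      Rabs (f y - f x - inner d (g x) (vsub y x)) <= eps * norm d (vsub y x).

Definition upd {A : Type} (s : nat -> A) (j : nat) (a : A) : nat -> A :=
  fun k => if Nat.eqb k j then a else s k.

(* Expectation of F(omega_0,...,omega_{m-1}) where the omega_j are independent,
   omega_j distributed according to the finite distribution D j
   (a list of (outcome, probability) pairs). Unused slots are set to a0. *)
Fixpoint Eprod {A : Type} (a0 : A) (m : nat) (D : nat -> list (A * R))
    (F : (nat -> A) -> R) : R :=
  match m with
  | O => F (fun _ => a0)
  | S m' => Eprod a0 m' D (fun s =>
      fold_right Rplus 0 (map (fun aw => snd aw * F (upd s m' (fst aw))) (D m')))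
  end.

(* uniform distribution on {0,...,n-1} (the indices of f_1..f_n, 0-based) *)
Definition Dunif (n : nat) : list (nat * R) := map (fun a => (a, / INR n)) (seq 0 n).

Definition qdist (delta : R) (b : nat) (y : R) : list (R * R) :=
  let M := 2 ^ (b - 1) in
  let lo := - M * delta in
  let hi := (M - 1) * delta in
  if Req_EM_T delta 0 then (0, 1) :: nil
  else if Rle_dec lo y then
    if Rle_dec y hi then
      let z := IZR (Int_part (y / delta)) * delta in
      (z, (z + delta - y) / delta) :: (z + delta, (y - z) / delta) :: nil
    else (hi, 1) :: nil
  else (lo, 1) :: nil.

Definition favg (n : nat) (f : nat -> (nat -> R) -> R) (x : nat -> R) : R :=
  / INR n * fsum n (fun i => f i x).
Definition gavg (n : nat) (g : nat -> (nat -> R) -> (nat -> R)) (x : nat -> R) : nat -> R :=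
  fun k => / INR n * fsum n (fun i => g i x k).

(* u^i, where worker i's B indices are I (i*B), ..., I (i*B + B - 1) *)
Definition uvec (g : nat -> (nat -> R) -> (nat -> R)) (x xt : nat -> R)
    (B : nat) (I : nat -> nat) (i : nat) : nat -> R :=
  fun k => / INR B * fsum B (fun a => g (I (i * B + a)%nat) x k - g (I (i * B + a)%nat) xt k).

Definition qdelta (d : nat) (lam : R) (b : nat) (u : nat -> R) : R :=
  lam * ninf d u / (2 ^ (b - 1) - 1).

(* distribution of the rounding slot j = i*d + k (worker i, coordinate k) *)
Definition Dq (g : nat -> (nat -> R) -> (nat -> R)) (x xt : nat -> R)
    (d B b : nat) (lam : R) (I : nat -> nat) (j : nat) : list (R * R) :=
  let u := uvec g x xt B I (j / d) in
  qdist (qdelta d lam b u) b (u (j mod d)).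

(* v = (1/N) sum_i Q(u^i) + grad f(xt), with r (i*d+k) the k-th coordinate of Q(u^i) *)
Definition vvec (n : nat) (g : nat -> (nat -> R) -> (nat -> R)) (xt : nat -> R)
    (d N : nat) (r : nat -> R) : nat -> R :=
  fun k => / INR N * fsum N (fun i => r (i * d + k)%nat) + gavg n g xt k.

Definition vhat (n : nat) (g : nat -> (nat -> R) -> (nat -> R)) (x xt : nat -> R)
    (B : nat) (J : nat -> nat) : nat -> R :=
  fun k => / INR B * fsum B (fun a => g (J a) x k - g (J a) xt k) + gavg n g xt k.

Definition count_out (d : nat) (lo hi : R) (u : nat -> R) : R :=
  fsum d (fun k => if Rle_dec lo (u k) then (if Rle_dec (u k) hi then 0 else 1) else 1).

(* Let [c_j = grad f_j(x) - grad f_j(xt)]. Each [u^i], and [vhat - grad f(xt)], is a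
   sample mean of the [c_j] over uniform indices; the population mean of the [c_j] is
   [grad f(x) - grad f(xt)], and their second moment [(1/n) sum_j |c_j|^2] is at most [2L]
   times the Bregman gap, by cocoercivity of gradients of convex [L]-smooth functions.
   For [v], split [v - grad f(x)] into the averaged rounding errors [Q(u^i) - u^i] and the
   sampling error of a mean over all [NB] indices, paying a factor 2: given the indices, a
   coordinate inside the grid range has rounding variance at most [delta^2/4], each of the
   at most [d_lambda] clipped ones errs by at most [(1 - lambda) |u^i|_inf], and the
   sampling error has second moment at most [1/(NB)] of the population one.
   For [vhat - v]: [vhat] is an unbiased estimate of [grad f(x)] independent of [v], so
   the cross term vanishes and the two mean square errors add. *)

From Stdlib Require Import Reals List Lra Lia Psatz FunctionalExtensionality.
Open Scope R_scope.

Lemma fsum_ext n f g : (forall k, (k < n)%nat -> f k = g k) -> fsum n f = fsum n g.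
Proof.
  induction n as [|n IH]; intros H; simpl; [reflexivity|].
  rewrite IH, H; [reflexivity|lia|intros; apply H; lia].
Qed.

Lemma fsum_add n f g : fsum n (fun k => f k + g k) = fsum n f + fsum n g.
Proof. induction n as [|n IH]; simpl; [lra|]. rewrite IH; lra. Qed.

Lemma fsum_sub n f g : fsum n (fun k => f k - g k) = fsum n f - fsum n g.
Proof. induction n as [|n IH]; simpl; [lra|]. rewrite IH; lra. Qed.

Lemma fsum_scal n c f : fsum n (fun k => c * f k) = c * fsum n f.
Proof. induction n as [|n IH]; simpl; [lra|]. rewrite IH; lra. Qed.

Lemma fsum_const n c : fsum n (fun _ => c) = INR n * c.
Proof. induction n as [|n IH]; simpl fsum; [simpl; lra|]. rewrite IH, S_INR; lra. Qed.

Lemma fsum_le n f g : (forall k, (k < n)%nat -> f k <= g k) -> fsum n f <= fsum n g.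
Proof.
  induction n as [|n IH]; intros H; simpl; [lra|].
  apply Rplus_le_compat; [apply IH; intros; apply H|apply H]; lia.
Qed.

Lemma fsum_nonneg n f : (forall k, (k < n)%nat -> 0 <= f k) -> 0 <= fsum n f.
Proof. intros H. rewrite <- (Rmult_0_r (INR n)), <- fsum_const. now apply fsum_le. Qed.

Lemma fsum_swap n m (F : nat -> nat -> R) :
  fsum n (fun i => fsum m (fun k => F i k)) = fsum m (fun k => fsum n (fun i => F i k)).
Proof.
  induction n as [|n IH]; simpl.
  - rewrite fsum_const; ring.
  - rewrite IH, <- fsum_add; reflexivity.
Qed.

Lemma fsum_split p q F : fsum (p + q) F = fsum p F + fsum q (fun a => F (p + a)%nat).
Proof.
  induction q as [|q IH]; simpl; [rewrite Nat.add_0_r; lra|].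
  rewrite Nat.add_succ_r; simpl; rewrite IH; lra.
Qed.

Lemma fsum_blocks N B F :
  fsum N (fun i => fsum B (fun a => F (i * B + a)%nat)) = fsum (N * B) F.
Proof.
  induction N as [|N IH]; simpl; [reflexivity|].
  rewrite IH, Nat.add_comm, fsum_split; reflexivity.
Qed.

Lemma fsum_mul n m a b :
  fsum n a * fsum m b = fsum n (fun j => fsum m (fun j' => a j * b j')).
Proof. induction n as [|n IH]; simpl; [lra|]. rewrite <- IH, fsum_scal; lra. Qed.

Lemma fsum_indicator m j V :
  (j < m)%nat -> fsum m (fun j' => if Nat.eqb j j' then V else 0) = V.
Proof.
  induction m as [|m IH]; intros Hj; [lia|]; simpl.
  destruct (Nat.eqb_spec j m) as [->|Hne].
  - rewrite (fsum_ext _ _ (fun _ => 0)), fsum_const; [lra|].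
    intros k Hk; destruct (Nat.eqb_spec m k); [lia|reflexivity].
  - rewrite IH by lia; lra.
Qed.

Lemma fsum_cauchy_schwarz n a b :
  fsum n (fun k => a k * b k) ^ 2
  <= fsum n (fun k => a k ^ 2) * fsum n (fun k => b k ^ 2).
Proof.
  (* Lagrange's identity: the gap is half the sum of the squares [(a_j b_k - a_k b_j)^2]. *)
  rewrite <- Rsqr_pow2; unfold Rsqr. rewrite !fsum_mul.
  set (P := fsum n (fun j => fsum n (fun k => a j ^ 2 * b k ^ 2))).
  assert (HP : P = fsum n (fun j => fsum n (fun k => a k ^ 2 * b j ^ 2)))
    by apply (fsum_swap n n (fun j k => a j ^ 2 * b k ^ 2)).
  assert (Hgap : fsum n (fun j => fsum n (fun k => (a j * b k - a k * b j) ^ 2))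
                 = P + P - 2 * fsum n (fun j => fsum n (fun k => a j * b j * (a k * b k)))).
  { rewrite HP at 2. unfold P. rewrite <- fsum_add, <- fsum_scal, <- fsum_sub.
    apply fsum_ext; intros j _.
    rewrite <- fsum_add, <- fsum_scal, <- fsum_sub.
    apply fsum_ext; intros k _; ring. }
  assert (0 <= fsum n (fun j => fsum n (fun k => (a j * b k - a k * b j) ^ 2))).
  { apply fsum_nonneg; intros; apply fsum_nonneg; intros; apply pow2_ge_0. }
  unfold P in *; lra.
Qed.

Lemma sqr_fsum_le n e : fsum n e ^ 2 <= INR n * fsum n (fun k => e k ^ 2).
Proof.
  pose proof (fsum_cauchy_schwarz n e (fun _ => 1)) as H; cbv beta in H.
  rewrite (fsum_ext n (fun k => e k * 1) e) in H by (intros; ring).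
  rewrite (fsum_ext n (fun k => 1 ^ 2) (fun _ => 1)), fsum_const in H by (intros; ring).
  lra.
Qed.

Definition sqnorm (d : nat) (u : nat -> R) : R := fsum d (fun k => u k ^ 2).

Lemma sqnorm_ext d u v : (forall k, (k < d)%nat -> u k = v k) -> sqnorm d u = sqnorm d v.
Proof. intros H; apply fsum_ext; intros k Hk; rewrite H; auto. Qed.

Lemma sqnorm_nonneg d u : 0 <= sqnorm d u.
Proof. apply fsum_nonneg; intros; apply pow2_ge_0. Qed.

Lemma norm_sq d u : norm d u ^ 2 = sqnorm d u.
Proof. apply pow2_sqrt, sqnorm_nonneg. Qed.

Lemma norm_nonneg d u : 0 <= norm d u.
Proof. apply sqrt_pos. Qed.

Lemma norm_ext d u v : (forall k, (k < d)%nat -> u k = v k) -> norm d u = norm d v.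
Proof. intros H; unfold norm; f_equal; now apply sqnorm_ext. Qed.

Lemma norm_scal d t u : norm d (fun k => t * u k) = Rabs t * norm d u.
Proof.
  unfold norm. rewrite (fsum_ext d _ (fun k => t ^ 2 * u k ^ 2)) by (intros; ring).
  rewrite fsum_scal, sqrt_mult_alt, <- pow2_abs, sqrt_pow2 by (apply pow2_ge_0 || apply Rabs_pos).
  reflexivity.
Qed.

Lemma inner_le_norm d u v : inner d u v <= norm d u * norm d v.
Proof.
  pose proof (fsum_cauchy_schwarz d u v) as H.
  fold (inner d u v) (sqnorm d u) (sqnorm d v) in H. rewrite <- !norm_sq in H.
  pose proof (Rmult_le_pos _ _ (norm_nonneg d u) (norm_nonneg d v)). nra.
Qed.

Lemma sqnorm_add_le d u w :
  sqnorm d (fun k => u k + w k) <= 2 * sqnorm d u + 2 * sqnorm d w.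
Proof.
  unfold sqnorm. rewrite <- !fsum_scal, <- fsum_add. apply fsum_le; intros k _.
  pose proof (pow2_ge_0 (u k - w k)). nra.
Qed.

Lemma sqnorm_mean_le d m (w : nat -> nat -> R) : (1 <= m)%nat ->
  sqnorm d (fun k => / INR m * fsum m (fun a => w a k))
  <= / INR m * fsum m (fun a => sqnorm d (w a)).
Proof.
  intros Hm. assert (0 < INR m) by (apply lt_0_INR; lia).
  unfold sqnorm. rewrite fsum_swap, <- fsum_scal. apply fsum_le; intros k _.
  pose proof (sqr_fsum_le m (fun a => w a k)) as J.
  replace ((/ INR m * fsum m (fun a => w a k)) ^ 2)
    with (/ INR m ^ 2 * fsum m (fun a => w a k) ^ 2) by (field; lra).
  replace (/ INR m * fsum m (fun a => w a k ^ 2))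
    with (/ INR m ^ 2 * (INR m * fsum m (fun a => w a k ^ 2))) by (field; lra).
  apply Rmult_le_compat_l; [left; apply Rinv_0_lt_compat, pow_lt; lra|exact J].
Qed.

Lemma ninf_nonneg d u : 0 <= ninf d u.
Proof. induction d as [|d IH]; simpl; [lra|]. eapply Rle_trans; [exact IH|apply Rmax_l]. Qed.

Lemma ninf_coord d u k : (k < d)%nat -> Rabs (u k) <= ninf d u.
Proof.
  induction d as [|d IH]; intros Hk; [lia|]; simpl.
  destruct (Nat.eq_dec k d) as [->|Hne]; [apply Rmax_r|].
  eapply Rle_trans; [apply IH; lia|apply Rmax_l].
Qed.

Lemma ninf_sq_le d u : ninf d u ^ 2 <= sqnorm d u.
Proof.
  induction d as [|d IH]; [unfold sqnorm; simpl; lra|].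
  unfold sqnorm in *; cbn [ninf fsum].
  pose proof (ninf_nonneg d u). pose proof (pow2_abs (u d)). pose proof (Rabs_pos (u d)).
  pose proof (sqnorm_nonneg d u). unfold sqnorm in *.
  unfold Rmax; destruct (Rle_dec (ninf d u) (Rabs (u d))); nra.
Qed.

Record expectation {T : Type} (E : (T -> R) -> R) : Prop := {
  expectation_add : forall F G, E (fun t => F t + G t) = E F + E G;
  expectation_scal : forall c F, E (fun t => c * F t) = c * E F;
  expectation_one : E (fun _ => 1) = 1 }.

Section Expectation.
Context {T : Type} (E : (T -> R) -> R) (HE : expectation E).

Lemma expectation_ext F G : (forall t, F t = G t) -> E F = E G.
Proof. intros H; f_equal; now apply functional_extensionality. Qed.

Lemma expectation_const c : E (fun _ => c) = c.
Proof.
  rewrite (expectation_ext _ (fun _ => c * 1)) by (intros; ring).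
  rewrite (expectation_scal _ HE), (expectation_one _ HE); ring.
Qed.

Lemma expectation_sub F G : E (fun t => F t - G t) = E F - E G.
Proof.
  rewrite (expectation_ext _ (fun t => F t + (-1) * G t)) by (intros; ring).
  rewrite (expectation_add _ HE), (expectation_scal _ HE); ring.
Qed.

Lemma expectation_fsum K (F : nat -> T -> R) :
  E (fun t => fsum K (fun k => F k t)) = fsum K (fun k => E (F k)).
Proof.
  induction K as [|K IH]; simpl; [apply expectation_const|].
  rewrite (expectation_add _ HE), IH; reflexivity.
Qed.

End Expectation.

Lemma expectation_compose {S T : Type} (E1 : (S -> R) -> R) (E2 : S -> (T -> R) -> R) :
  expectation E1 -> (forall s, expectation (E2 s)) ->
  expectation (fun F : S * T -> R => E1 (fun s => E2 s (fun t => F (s, t)))).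
Proof.
  intros H1 H2; split.
  - intros F G. rewrite <- (expectation_add _ H1). apply expectation_ext; intros s.
    apply (expectation_add _ (H2 s)).
  - intros c F. rewrite <- (expectation_scal _ H1). apply expectation_ext; intros s.
    apply (expectation_scal _ (H2 s)).
  - rewrite (expectation_ext E1 _ (fun _ => 1)) by (intros s; apply (expectation_one _ (H2 s))).
    apply (expectation_one _ H1).
Qed.

(* The nested form makes [X] and [Y] independent, so the cross term
   [-2 <X - c, Y - c>] of [|X - Y|^2] has mean zero. *)
Lemma expectation_norm_sub_indep {S T : Type} (E1 : (S -> R) -> R) (E2 : (T -> R) -> R)
    d (X : S -> nat -> R) (Y : T -> nat -> R) (c : nat -> R) :
  expectation E1 -> expectation E2 -> (forall k, E1 (fun s => X s k) = c k) ->
  E1 (fun s => E2 (fun t => norm d (vsub (X s) (Y t)) ^ 2))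
  = E1 (fun s => norm d (vsub (X s) c) ^ 2) + E2 (fun t => norm d (vsub (Y t) c) ^ 2).
Proof.
  intros H1 H2 Hmean.
  assert (Hpt : forall s t, norm d (vsub (X s) (Y t)) ^ 2
    = norm d (vsub (X s) c) ^ 2 + norm d (vsub (Y t) c) ^ 2
      - 2 * fsum d (fun k => (X s k - c k) * (Y t k - c k))).
  { intros s t. rewrite !norm_sq. unfold sqnorm.
    rewrite <- fsum_scal, <- fsum_add, <- fsum_sub. apply fsum_ext; intros; unfold vsub; ring. }
  rewrite (expectation_ext E1 _ (fun s => norm d (vsub (X s) c) ^ 2
     + E2 (fun t => norm d (vsub (Y t) c) ^ 2)
     - 2 * fsum d (fun k => (X s k - c k) * E2 (fun t => Y t k - c k)))).
  - rewrite (expectation_sub _ H1), (expectation_add _ H1), (expectation_const _ H1),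
      (expectation_scal _ H1), (expectation_fsum _ H1).
    rewrite (fsum_ext d _ (fun _ => 0)), fsum_const; [ring|].
    intros k _. rewrite (expectation_ext E1 _ (fun s => E2 (fun t => Y t k - c k) * (X s k - c k)))
      by (intros; ring).
    rewrite (expectation_scal _ H1), (expectation_sub _ H1), (expectation_const _ H1), Hmean; ring.
  - intros s. rewrite (expectation_ext E2 _ _ (Hpt s)).
    rewrite (expectation_sub _ H2), (expectation_add _ H2), (expectation_const _ H2),
      (expectation_scal _ H2), (expectation_fsum _ H2).
    f_equal; f_equal; apply fsum_ext; intros k _. apply (expectation_scal _ H2).
Qed.

Definition Ex {A : Type} (l : list (A * R)) (phi : A -> R) : R :=
  fold_right Rplus 0 (map (fun aw => snd aw * phi (fst aw)) l).

Section FiniteDistribution.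
Context {A : Type}.

Lemma Ex_cons (aw : A * R) l phi : Ex (aw :: l) phi = snd aw * phi (fst aw) + Ex l phi.
Proof. reflexivity. Qed.

Lemma Ex_app (l1 l2 : list (A * R)) phi : Ex (l1 ++ l2) phi = Ex l1 phi + Ex l2 phi.
Proof.
  induction l1 as [|aw l1 IH]; [simpl app; change (Ex nil phi) with 0; lra|].
  simpl app; rewrite !Ex_cons, IH; lra.
Qed.

Lemma Ex_add (l : list (A * R)) phi psi :
  Ex l (fun a => phi a + psi a) = Ex l phi + Ex l psi.
Proof. induction l as [|aw l IH]; [unfold Ex; simpl; lra|]. rewrite !Ex_cons, IH; lra. Qed.

Lemma Ex_scal (l : list (A * R)) c phi : Ex l (fun a => c * phi a) = c * Ex l phi.
Proof. induction l as [|aw l IH]; [unfold Ex; simpl; lra|]. rewrite !Ex_cons, IH; lra. Qed.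

Lemma Ex_expectation (l : list (A * R)) : Ex l (fun _ => 1) = 1 -> expectation (Ex l).
Proof. intros H1; split; [apply Ex_add|apply Ex_scal|exact H1]. Qed.

Lemma Ex_le (l : list (A * R)) (P : A -> Prop) phi psi :
  (forall aw, In aw l -> P (fst aw) /\ 0 <= snd aw) ->
  (forall a, P a -> phi a <= psi a) -> Ex l phi <= Ex l psi.
Proof.
  intros Hl H; induction l as [|aw l IH]; [unfold Ex; simpl; lra|]. rewrite !Ex_cons.
  destruct (Hl aw) as [HP Hw]; [now left|].
  apply Rplus_le_compat; [apply Rmult_le_compat_l; auto|].
  apply IH; intros; apply Hl; now right.
Qed.

End FiniteDistribution.

Section ProductDistribution.
Context {A : Type} (a0 : A) (D : nat -> list (A * R)).
Hypothesis D_mass : forall j, Ex (D j) (fun _ => 1) = 1.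

Lemma Eprod_S m F :
  Eprod a0 (S m) D F = Eprod a0 m D (fun s => Ex (D m) (fun a => F (upd s m a))).
Proof. reflexivity. Qed.

Lemma Eprod_expectation m : expectation (Eprod a0 m D).
Proof.
  induction m as [|m IH]; [split; reflexivity|].
  split; intros; rewrite ?Eprod_S.
  - rewrite <- (expectation_add _ IH). apply expectation_ext; intros s. apply Ex_add.
  - rewrite <- (expectation_scal _ IH). apply expectation_ext; intros s. apply Ex_scal.
  - rewrite (expectation_ext _ _ (fun _ => 1)) by (intros; apply D_mass).
    apply (expectation_one _ IH).
Qed.

Lemma Eprod_le m (P : A -> Prop) F G : P a0 ->
  (forall j aw, In aw (D j) -> P (fst aw) /\ 0 <= snd aw) ->
  (forall s, (forall j, P (s j)) -> F s <= G s) -> Eprod a0 m D F <= Eprod a0 m D G.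
Proof.
  intros H0 HD; revert F G; induction m as [|m IH]; intros F G H; [apply H; auto|].
  rewrite !Eprod_S. apply IH; intros s Hs. apply (Ex_le _ P); [apply HD|].
  intros a Ha. apply H; intros j. unfold upd. destruct (Nat.eqb j m); auto.
Qed.

Lemma Eprod_marginal m j (phi : A -> R) : (j < m)%nat ->
  Eprod a0 m D (fun s => phi (s j)) = Ex (D j) phi.
Proof.
  induction m as [|m IH]; intros Hj; [lia|]. rewrite Eprod_S.
  destruct (Nat.eq_dec j m) as [->|Hne].
  - rewrite <- (expectation_const _ (Eprod_expectation m) (Ex (D m) phi)).
    apply expectation_ext; intros s. apply expectation_ext; intros a.
    unfold upd; rewrite Nat.eqb_refl; reflexivity.
  - rewrite <- IH by lia. apply expectation_ext; intros s.
    rewrite (expectation_ext (Ex _) _ (fun _ => phi (s j))).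
    + apply (expectation_const _ (Ex_expectation _ (D_mass m))).
    + intros a; unfold upd. destruct (Nat.eqb_spec j m); [lia|reflexivity].
Qed.

Lemma Eprod_marginal2 m j j' (phi psi : A -> R) :
  (j < m)%nat -> (j' < m)%nat -> j <> j' ->
  Eprod a0 m D (fun s => phi (s j) * psi (s j')) = Ex (D j) phi * Ex (D j') psi.
Proof.
  induction m as [|m IH]; intros Hj Hj' Hne; [lia|]. rewrite Eprod_S.
  assert (Hupd : forall (s : nat -> A) (a : A) k, k <> m -> upd s m a k = s k).
  { intros s a k Hk; unfold upd. destruct (Nat.eqb_spec k m); [lia|reflexivity]. }
  assert (Hupd_m : forall (s : nat -> A) (a : A), upd s m a m = a).
  { intros s a; unfold upd; now rewrite Nat.eqb_refl. }
  destruct (Nat.eq_dec j m) as [->|Hjm]; [|destruct (Nat.eq_dec j' m) as [->|Hj'm]].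
  - rewrite <- (Eprod_marginal m j' psi), <- (expectation_scal _ (Eprod_expectation m)) by lia.
    apply expectation_ext; intros s. rewrite (Rmult_comm (Ex _ _)), <- Ex_scal.
    apply expectation_ext; intros a. rewrite Hupd_m, Hupd by lia; ring.
  - rewrite <- (Eprod_marginal m j phi), (Rmult_comm (Eprod _ _ _ _)),
      <- (expectation_scal _ (Eprod_expectation m)) by lia.
    apply expectation_ext; intros s. rewrite (Rmult_comm (Ex _ _)), <- Ex_scal.
    apply expectation_ext; intros a. rewrite Hupd_m, Hupd by lia; ring.
  - rewrite <- IH by lia. apply expectation_ext; intros s.
    rewrite (expectation_ext (Ex _) _ (fun _ => phi (s j) * psi (s j'))).
    + apply (expectation_const _ (Ex_expectation _ (D_mass m))).
    + intros a; rewrite !Hupd by lia; reflexivity.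
Qed.

End ProductDistribution.

Section SampleMean.
Context {A : Type} (a0 : A) (D : list (A * R)).
Hypothesis D_mass : Ex D (fun _ => 1) = 1.

Let HD : expectation (Ex D) := Ex_expectation D D_mass.

Lemma Ex_centered_sq (phi : A -> R) :
  Ex D (fun a => (phi a - Ex D phi) ^ 2) = Ex D (fun a => phi a ^ 2) - Ex D phi ^ 2.
Proof.
  rewrite (expectation_ext _ _ (fun a => phi a ^ 2 + (-2 * Ex D phi) * phi a + Ex D phi ^ 2))
    by (intros; ring).
  rewrite !(expectation_add _ HD), (expectation_scal _ HD), (expectation_const _ HD); ring.
Qed.

Lemma Eprod_sample_mean_var m (phi : A -> R) : (1 <= m)%nat ->
  Eprod a0 m (fun _ => D) (fun s => (/ INR m * fsum m (fun j => phi (s j)) - Ex D phi) ^ 2)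
  = / INR m * (Ex D (fun a => phi a ^ 2) - Ex D phi ^ 2).
Proof.
  intros Hm. assert (Hm0 : INR m <> 0) by (apply not_0_INR; lia).
  set (mu := Ex D phi).
  pose proof (Eprod_expectation a0 (fun _ => D) (fun _ => D_mass) m) as HE.
  rewrite (expectation_ext _ _ (fun s => / INR m ^ 2 *
     fsum m (fun j => fsum m (fun j' => (phi (s j) - mu) * (phi (s j') - mu))))).
  2:{ intros s. rewrite <- fsum_mul, fsum_sub, fsum_const. field. exact Hm0. }
  rewrite (expectation_scal _ HE), (expectation_fsum _ HE).
  rewrite (fsum_ext m _ (fun _ => Ex D (fun a => (phi a - mu) ^ 2))).
  - rewrite fsum_const, Ex_centered_sq. unfold mu; field; exact Hm0.
  - intros j Hj. rewrite (expectation_fsum _ HE).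
    rewrite <- (fsum_indicator m j (Ex D (fun a => (phi a - mu) ^ 2))) by exact Hj.
    apply fsum_ext; intros j' Hj'. destruct (Nat.eqb_spec j j') as [<-|Hne].
    + rewrite <- (Eprod_marginal a0 (fun _ => D) (fun _ => D_mass) m j
                    (fun a => (phi a - mu) ^ 2)) by exact Hj.
      apply expectation_ext; intros s; ring.
    + rewrite (Eprod_marginal2 a0 _ (fun _ => D_mass) m j j'
                 (fun a => phi a - mu) (fun a => phi a - mu))
        by assumption.
      rewrite (expectation_sub _ HD), (expectation_const _ HD). unfold mu; ring.
Qed.

Lemma Eprod_sample_mean_sqnorm m d (X : A -> nat -> R) : (1 <= m)%nat ->
  Eprod a0 m (fun _ => D)
    (fun s => sqnorm d (fun k => / INR m * fsum m (fun j => X (s j) k) - Ex D (fun a => X a k)))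
  <= / INR m * Ex D (fun a => sqnorm d (X a)).
Proof.
  intros Hm.
  pose proof (Eprod_expectation a0 (fun _ => D) (fun _ => D_mass) m) as HE.
  unfold sqnorm at 1. rewrite (expectation_fsum _ HE).
  unfold sqnorm; rewrite (expectation_fsum _ HD), <- fsum_scal. apply fsum_le; intros k _.
  rewrite (Eprod_sample_mean_var m (fun a => X a k)) by exact Hm.
  assert (0 < / INR m) by (apply Rinv_0_lt_compat, lt_0_INR; lia).
  pose proof (pow2_ge_0 (Ex D (fun a => X a k))). nra.
Qed.

Hypothesis D_weights : forall aw, In aw D -> 0 <= snd aw.

Lemma Eprod_block_mean_sqnorm m d B (p : nat -> nat) (X : A -> nat -> R) :
  (1 <= B)%nat -> (forall a, (a < B)%nat -> (p a < m)%nat) ->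
  Eprod a0 m (fun _ => D) (fun s => sqnorm d (fun k => / INR B * fsum B (fun a => X (s (p a)) k)))
  <= Ex D (fun a => sqnorm d (X a)).
Proof.
  intros HB Hp. assert (0 < INR B) by (apply lt_0_INR; lia).
  pose proof (Eprod_expectation a0 (fun _ => D) (fun _ => D_mass) m) as HE.
  eapply Rle_trans.
  - apply (Eprod_le a0 _ m (fun _ => True)); [exact I| |].
    + intros j aw Haw; split; [exact I|apply D_weights, Haw].
    + intros s _. apply (sqnorm_mean_le d B (fun a => X (s (p a)))), HB.
  - rewrite (expectation_scal _ HE), (expectation_fsum _ HE).
    rewrite (fsum_ext B _ (fun _ => Ex D (fun a => sqnorm d (X a)))).
    + rewrite fsum_const; right; field; lra.
    + intros a Ha. exact (Eprod_marginal a0 _ (fun _ => D_mass) m (p a) _ (Hp a Ha)).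
Qed.

End SampleMean.

Lemma Ex_Dunif n phi : Ex (Dunif n) phi = / INR n * fsum n phi.
Proof.
  unfold Dunif. generalize (/ INR n) as c; intros c.
  induction n as [|n IH]; [unfold Ex; simpl; lra|].
  rewrite seq_S, map_app, Ex_app, IH. unfold Ex; simpl; lra.
Qed.

Lemma Dunif_mass n : (1 <= n)%nat -> Ex (Dunif n) (fun _ => 1) = 1.
Proof. intros Hn. rewrite Ex_Dunif, fsum_const. field. apply not_0_INR; lia. Qed.

Lemma Dunif_support n aw : In aw (Dunif n) -> (fst aw < n)%nat /\ 0 <= snd aw.
Proof.
  unfold Dunif; intros H. apply in_map_iff in H as [a [<- Ha]]. apply in_seq in Ha.
  simpl; split; [lia|]. left; apply Rinv_0_lt_compat, lt_0_INR; lia.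
Qed.

Definition out_of_range (lo hi y : R) : R :=
  if Rle_dec lo y then (if Rle_dec y hi then 0 else 1) else 1.

Lemma count_out_fsum d lo hi u : count_out d lo hi u = fsum d (fun k => out_of_range lo hi (u k)).
Proof. reflexivity. Qed.

Lemma qdist_mass delta b y : Ex (qdist delta b y) (fun _ => 1) = 1.
Proof.
  unfold qdist. destruct (Req_EM_T delta 0); [unfold Ex; simpl; lra|].
  destruct (Rle_dec _ y); [destruct (Rle_dec y _)|]; unfold Ex; simpl; try lra.
  field; assumption.
Qed.

Lemma grid_point_bounds delta y : 0 < delta ->
  IZR (Int_part (y / delta)) * delta <= y < IZR (Int_part (y / delta)) * delta + delta.
Proof.
  intros H. destruct (base_Int_part (y / delta)) as [H1 H2].
  assert (y = y / delta * delta) by (field; lra). split; nra.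
Qed.

Lemma qdist_weights_nonneg delta b y aw : 0 <= delta -> In aw (qdist delta b y) -> 0 <= snd aw.
Proof.
  intros Hd Hin. unfold qdist in Hin.
  destruct (Req_EM_T delta 0); [destruct Hin as [<-|[]]; simpl; lra|].
  pose proof (grid_point_bounds delta y ltac:(lra)).
  destruct (Rle_dec _ y); [destruct (Rle_dec y _)|]; simpl in Hin.
  - destruct Hin as [<-|[<-|[]]]; simpl; apply Rmult_le_pos;
      try (left; apply Rinv_0_lt_compat); lra.
  - destruct Hin as [<-|[]]; simpl; lra.
  - destruct Hin as [<-|[]]; simpl; lra.
Qed.

(* Outside the grid range [y] is clipped to an end point at distance at most [c - hi],
   since the bottom grid point lies below [-hi]. *)
Lemma qdist_sq_err delta b y c : 0 <= delta -> Rabs y <= c ->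
  (2 ^ (b - 1) - 1) * delta <= c ->
  Ex (qdist delta b y) (fun a => (a - y) ^ 2)
  <= delta ^ 2 / 4
     + out_of_range (- 2 ^ (b - 1) * delta) ((2 ^ (b - 1) - 1) * delta) y
       * (c - (2 ^ (b - 1) - 1) * delta) ^ 2.
Proof.
  intros Hd Hy Hhi. unfold qdist, out_of_range.
  set (M := 2 ^ (b - 1)) in *. set (hi := (M - 1) * delta) in *.
  assert (Hyc : - c <= y <= c).
  { pose proof (Rle_abs y). pose proof (Rle_abs (- y)). rewrite Rabs_Ropp in *. lra. }
  pose proof (pow2_ge_0 delta). pose proof (pow2_ge_0 (c - hi)).
  destruct (Req_EM_T delta 0) as [->|Hd0].
  - unfold Ex; simpl.
    assert (Hhi0 : hi = 0) by (unfold hi; ring). rewrite Hhi0.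
    destruct (Rle_dec _ y); [destruct (Rle_dec y 0)|]; nra.
  - pose proof (grid_point_bounds delta y ltac:(lra)) as [Hz1 Hz2].
    destruct (Rle_dec _ y) as [Hlo|Hlo]; [destruct (Rle_dec y hi) as [Hin|Hout]|];
      unfold Ex; simpl.
    + set (z := IZR (Int_part (y / delta)) * delta) in *.
      match goal with |- ?l <= _ => replace l with ((y - z) * (z + delta - y)) by (field; lra) end.
      pose proof (pow2_ge_0 (delta - 2 * (y - z))). nra.
    + nra.
    + assert (Hlo' : - M * delta <= - hi) by (unfold hi; nra).
      nra.
Qed.

Lemma grid_size_ge2 b : (2 <= b)%nat -> 2 <= 2 ^ (b - 1).
Proof.
  intros Hb. replace (b - 1)%nat with (S (b - 2)) by lia. simpl.
  pose proof (pow_R1_Rle 2 (b - 2)). lra.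
Qed.

Lemma qdelta_nonneg d lam b u : 0 <= lam -> (2 <= b)%nat -> 0 <= qdelta d lam b u.
Proof.
  intros Hl Hb. pose proof (grid_size_ge2 b Hb). pose proof (ninf_nonneg d u).
  unfold qdelta, Rdiv. apply Rmult_le_pos; [now apply Rmult_le_pos|].
  left; apply Rinv_0_lt_compat; lra.
Qed.

Definition quant_const (d : nat) (lam : R) (b : nat) (dlam : R) : R :=
  INR d * lam ^ 2 / (4 * (2 ^ (b - 1) - 1) ^ 2) + dlam * (1 - lam) ^ 2.

Lemma quant_const_nonneg d lam b dlam : (2 <= b)%nat -> 0 <= dlam -> 0 <= quant_const d lam b dlam.
Proof.
  intros Hb Hdl. pose proof (grid_size_ge2 b Hb). unfold quant_const, Rdiv.
  pose proof (pos_INR d). pose proof (pow2_ge_0 lam). pose proof (pow2_ge_0 (1 - lam)).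
  assert (0 < / (4 * (2 ^ (b - 1) - 1) ^ 2))
    by (apply Rinv_0_lt_compat, Rmult_lt_0_compat, pow_lt; lra).
  apply Rplus_le_le_0_compat; [apply Rmult_le_pos; [apply Rmult_le_pos|]|apply Rmult_le_pos]; lra.
Qed.

(* With [delta = lam ||u||_inf / (2^(b-1) - 1)] the top grid point is [lam ||u||_inf], so
   each clipped coordinate costs at most [(1 - lam)^2 ||u||_inf^2]. *)
Lemma qdist_sq_err_vec d lam b dlam u : 0 < lam <= 1 -> (2 <= b)%nat -> 0 <= dlam ->
  count_out d (- 2 ^ (b - 1) * qdelta d lam b u) ((2 ^ (b - 1) - 1) * qdelta d lam b u) u <= dlam ->
  fsum d (fun k => Ex (qdist (qdelta d lam b u) b (u k)) (fun a => (a - u k) ^ 2))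
  <= quant_const d lam b dlam * sqnorm d u.
Proof.
  intros Hl Hb Hdl Hcount. rewrite count_out_fsum in Hcount.
  pose proof (grid_size_ge2 b Hb).
  set (nu := ninf d u). set (delta := qdelta d lam b u) in *.
  assert (Hhi : (2 ^ (b - 1) - 1) * delta = lam * nu) by (unfold delta, qdelta, nu; field; lra).
  eapply Rle_trans; [apply fsum_le; intros k Hk; apply (qdist_sq_err _ b (u k) nu)|].
  - apply qdelta_nonneg; [lra|exact Hb].
  - apply ninf_coord, Hk.
  - assert (0 <= nu) by apply ninf_nonneg. nra.
  - rewrite fsum_add, fsum_const, Hhi.
    rewrite (fsum_ext d _ (fun k => ((1 - lam) * nu) ^ 2
        * out_of_range (- 2 ^ (b - 1) * delta) (lam * nu) (u k))) by (intros; ring).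
    rewrite fsum_scal.
    assert (Hdelta : delta ^ 2 / 4 = lam ^ 2 / (4 * (2 ^ (b - 1) - 1) ^ 2) * nu ^ 2)
      by (unfold delta, qdelta, nu; field; lra).
    rewrite Hdelta. rewrite Hhi in Hcount.
    apply Rle_trans with (quant_const d lam b dlam * nu ^ 2).
    + unfold quant_const.
      assert (0 <= ((1 - lam) * nu) ^ 2) by apply pow2_ge_0.
      assert (((1 - lam) * nu) ^ 2 * fsum d (fun k => out_of_range (- 2 ^ (b - 1) * delta)
                (lam * nu) (u k)) <= ((1 - lam) * nu) ^ 2 * dlam)
        by (apply Rmult_le_compat_l; assumption).
      unfold Rdiv; nra.
    + apply Rmult_le_compat_l; [now apply quant_const_nonneg|apply ninf_sq_le].
Qed.

Section Gradient.
Variables (d : nat) (f : (nat -> R) -> R) (g : (nat -> R) -> nat -> R).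
Hypothesis Hgrad : has_gradient d f g.

Lemma deriv_along_line x p t :
  derivable_pt_lim (fun t => f (fun k => x k + t * p k)) t
    (inner d (g (fun k => x k + t * p k)) p).
Proof.
  intros eps Heps. set (q := fun k => x k + t * p k). set (P := norm d p).
  pose proof (norm_nonneg d p) as HP; fold P in HP.
  set (e' := eps / (2 * (P + 1))).
  assert (He' : 0 < e') by (unfold e'; apply Rdiv_lt_0_compat; lra).
  destruct (Hgrad q e' He') as [dl [Hdl Hfr]].
  assert (Hpos : 0 < dl / (P + 1)) by (apply Rdiv_lt_0_compat; lra).
  exists (mkposreal _ Hpos); simpl. intros h Hh0 Hh. cbv beta; fold q.
  set (y := fun k => x k + (t + h) * p k).
  assert (Hn : norm d (vsub y q) = Rabs h * P).
  { rewrite (norm_ext d _ (fun k => h * p k)) by (intros; unfold vsub, y, q; ring).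
    apply norm_scal. }
  assert (Hi : inner d (g q) (vsub y q) = h * inner d (g q) p).
  { unfold inner. rewrite <- fsum_scal. apply fsum_ext; intros; unfold vsub, y, q; ring. }
  assert (Hah : 0 < Rabs h) by (apply Rabs_pos_lt; auto).
  assert (HhP : Rabs h * P < dl).
  { apply Rle_lt_trans with (Rabs h * (P + 1)); [nra|].
    apply Rmult_lt_reg_r with (/ (P + 1)); [apply Rinv_0_lt_compat; lra|].
    replace (Rabs h * (P + 1) * / (P + 1)) with (Rabs h) by (field; lra). exact Hh. }
  specialize (Hfr y). rewrite Hn, Hi in Hfr. specialize (Hfr HhP).
  replace ((f y - f q) / h - inner d (g q) p)
    with ((f y - f q - h * inner d (g q) p) * / h) by (field; auto).
  rewrite Rabs_mult, Rabs_inv.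
  apply Rle_lt_trans with (e' * (Rabs h * P) * / Rabs h).
  - apply Rmult_le_compat_r; [left; apply Rinv_0_lt_compat|]; assumption.
  - replace (e' * (Rabs h * P) * / Rabs h) with (eps * P / (2 * (P + 1)))
      by (unfold e'; field; lra).
    apply Rmult_lt_reg_r with (2 * (P + 1)); [lra|].
    replace (eps * P / (2 * (P + 1)) * (2 * (P + 1))) with (eps * P) by (field; lra). nra.
Qed.

(* The slope of a convex function along a segment at its left end is at most
   the secant slope [f z - f x]. *)
Lemma convex_gradient_ineq x z : convex_on f -> f x + inner d (g x) (vsub z x) <= f z.
Proof.
  intros Hconv. set (p := vsub z x).
  assert (Hx : (fun k => x k + 0 * p k) = x) by (apply functional_extensionality; intros; ring).
  pose proof (deriv_along_line x p 0) as Hder. rewrite Hx in Hder.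
  enough (inner d (g x) p <= f z - f x) by lra.
  apply Rle_plus_epsilon; intros eps Heps.
  destruct (Hder eps Heps) as [dl Hdl].
  set (h := Rmin 1 (dl / 2)).
  assert (Hh : 0 < h <= 1).
  { split; [apply Rmin_glb_lt; [lra|pose proof (cond_pos dl); lra]|apply Rmin_l]. }
  assert (Hhd : Rabs h < dl).
  { rewrite Rabs_pos_eq by lra. pose proof (Rmin_r 1 (dl / 2)). pose proof (cond_pos dl).
    unfold h in *; lra. }
  specialize (Hdl h ltac:(lra) Hhd). rewrite Rplus_0_l, Hx in Hdl.
  assert (Hsec : (f (fun k => x k + h * p k) - f x) / h <= f z - f x).
  { replace (fun k => x k + h * p k) with (fun k => h * z k + (1 - h) * x k)
      by (apply functional_extensionality; intros; unfold p, vsub; ring).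
    pose proof (Hconv z x h ltac:(lra)).
    apply Rmult_le_reg_r with h; [lra|]. unfold Rdiv; rewrite Rmult_assoc, Rinv_l by lra. lra. }
  pose proof (Rle_abs (inner d (g x) p - (f (fun k => x k + h * p k) - f x) / h)).
  rewrite <- Rabs_Ropp in Hdl.
  replace (- ((f (fun k => x k + h * p k) - f x) / h - inner d (g x) p))
    with (inner d (g x) p - (f (fun k => x k + h * p k) - f x) / h) in Hdl by ring.
  lra.
Qed.

Variable L : R.
Hypothesis Hlip : forall y z, norm d (vsub (g y) (g z)) <= L * norm d (vsub y z).

Lemma lipschitz_gradient_upper x y :
  f y <= f x + inner d (g x) (vsub y x) + L / 2 * norm d (vsub y x) ^ 2.
Proof.
  set (p := vsub y x). set (P := norm d p). set (I0 := inner d (g x) p).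
  pose proof (norm_nonneg d p) as HP; fold P in HP.
  set (line := fun t k => x k + t * p k).
  (* The derivative [<g (line t) - g x, p> - L P^2 t] of [h] is nonpositive by
     Cauchy-Schwarz and the Lipschitz bound, so [h 1 <= h 0] by the mean value theorem. *)
  set (h := fun t => f (line t) - (I0 * t + L / 2 * P ^ 2 * Rsqr t)).
  set (h' := fun t => inner d (g (line t)) p - (I0 * 1 + L / 2 * P ^ 2 * (2 * t))).
  assert (Hd : forall t, derivable_pt_lim h t (h' t)).
  { intros t. apply (derivable_pt_lim_minus (fun t => f (line t))); [apply deriv_along_line|].
    apply (derivable_pt_lim_plus (fun t => I0 * t)); apply derivable_pt_lim_scal;
      [apply derivable_pt_lim_id|apply derivable_pt_lim_Rsqr]. }
  set (pr := fun t => exist (fun l => derivable_pt_abs h t l) (h' t) (Hd t) : derivable_pt h t).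
  destruct (MVT_cor1 h 0 1 pr Rlt_0_1) as [c [Hc Hc01]].
  rewrite (derive_pt_eq_0 h c (h' c) (pr c) (Hd c)) in Hc.
  assert (Hslope : h' c <= 0).
  { unfold h'.
    assert (Hdiff : inner d (g (line c)) p - I0 = inner d (vsub (g (line c)) (g x)) p).
    { unfold I0, inner. rewrite <- fsum_sub. apply fsum_ext; intros; unfold vsub; ring. }
    assert (Hseg : norm d (vsub (line c) x) = c * P).
    { rewrite (norm_ext d _ (fun k => c * p k)) by (intros; unfold vsub, line; ring).
      rewrite norm_scal, Rabs_pos_eq by lra; reflexivity. }
    pose proof (inner_le_norm d (vsub (g (line c)) (g x)) p) as Hcs; fold P in Hcs.
    pose proof (Hlip (line c) x) as Hl; rewrite Hseg in Hl.
    pose proof (Rmult_le_compat_r P _ _ HP Hl). nra. }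
  assert (Hline0 : line 0 = x) by (apply functional_extensionality; intros; unfold line; ring).
  assert (Hline1 : line 1 = y)
    by (apply functional_extensionality; intros; unfold line, p, vsub; ring).
  assert (Hh : h 1 <= h 0) by nra.
  unfold h in Hh; rewrite Hline0, Hline1 in Hh. unfold Rsqr in Hh. lra.
Qed.

(* For [L > 0], compare the lower (convexity) and upper (Lipschitz) bounds at
   [z = y - (g y - g x) / L]; for [L <= 0] the gradient is constant and the upper
   bound makes the right-hand side nonnegative. *)
Lemma lipschitz_gradient_cocoercive x y : convex_on f ->
  sqnorm d (vsub (g x) (g y)) <= 2 * L * (f y - f x - inner d (g x) (vsub y x)).
Proof.
  intros Hconv. set (Dg := vsub (g y) (g x)).
  assert (HDg : sqnorm d (vsub (g x) (g y)) = sqnorm d Dg)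
    by (unfold sqnorm; apply fsum_ext; intros; unfold Dg, vsub; ring).
  rewrite HDg. pose proof (sqnorm_nonneg d Dg).
  destruct (Rle_dec L 0) as [HL|HL].
  - pose proof (Hlip y x). pose proof (norm_nonneg d (vsub y x)).
    pose proof (norm_nonneg d Dg). pose proof (norm_sq d Dg).
    assert (Hzero : norm d Dg = 0) by (unfold Dg in *; nra).
    pose proof (lipschitz_gradient_upper x y). pose proof (pow2_ge_0 (norm d (vsub y x))).
    rewrite Hzero in *. nra.
  - set (z := fun k => y k - / L * Dg k).
    pose proof (convex_gradient_ineq x z Hconv) as Hlow.
    pose proof (lipschitz_gradient_upper y z) as Hup.
    assert (Hinner : inner d (g x) (vsub z x) - inner d (g x) (vsub y x)
                     - inner d (g y) (vsub z y) = / L * sqnorm d Dg).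
    { unfold inner, sqnorm. rewrite <- !fsum_sub, <- fsum_scal.
      apply fsum_ext; intros; unfold z, Dg, vsub; field; lra. }
    assert (Hstep : norm d (vsub z y) ^ 2 = / L ^ 2 * sqnorm d Dg).
    { rewrite norm_sq. unfold sqnorm. rewrite <- fsum_scal.
      apply fsum_ext; intros; unfold z, vsub; field; lra. }
    rewrite Hstep in Hup.
    assert (Hgap : sqnorm d Dg / (2 * L) <= f y - f x - inner d (g x) (vsub y x)).
    { replace (sqnorm d Dg / (2 * L)) with (/ L * sqnorm d Dg - L / 2 * (/ L ^ 2 * sqnorm d Dg))
        by (field; lra).
      lra. }
    apply Rmult_le_compat_l with (r := 2 * L) in Hgap; [|lra].
    replace (2 * L * (sqnorm d Dg / (2 * L))) with (sqnorm d Dg) in Hgap by (field; lra).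
    exact Hgap.
Qed.

End Gradient.

Section Estimator.
Variables (n d : nat) (g : nat -> (nat -> R) -> nat -> R) (x xt : nat -> R).
Variables (N B b : nat) (lam dlam : R).
Hypotheses (Hn : (1 <= n)%nat) (HN : (1 <= N)%nat) (HB : (1 <= B)%nat) (Hb : (2 <= b)%nat).
Hypotheses (Hlam : 0 < lam <= 1) (Hdlam : 0 <= dlam).

Definition grad_diff (c : nat) : nat -> R := vsub (g c x) (g c xt).

Definition grad_diff_moment : R := Ex (Dunif n) (fun c => sqnorm d (grad_diff c)).

Lemma Ex_grad_diff k : Ex (Dunif n) (fun c => grad_diff c k) = gavg n g x k - gavg n g xt k.
Proof. rewrite Ex_Dunif. unfold gavg, grad_diff, vsub. rewrite fsum_sub; ring. Qed.

Definition sampling_error (I : nat -> nat) : nat -> R :=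
  fun k => / INR N * fsum N (fun i => uvec g x xt B I i k) + gavg n g xt k - gavg n g x k.

Lemma sampling_error_eq I k : sampling_error I k =
  / INR (N * B) * fsum (N * B) (fun j => grad_diff (I j) k) - Ex (Dunif n) (fun c => grad_diff c k).
Proof.
  rewrite Ex_grad_diff. unfold sampling_error, uvec.
  rewrite <- (fsum_blocks N B (fun j => grad_diff (I j) k)), (fsum_scal N (/ INR B)), mult_INR.
  unfold grad_diff, vsub. field; split; apply not_0_INR; lia.
Qed.

Definition rounding_error (I : nat -> nat) (r : nat -> R) (i : nat) : nat -> R :=
  fun k => r (i * d + k)%nat - uvec g x xt B I i k.

Lemma vvec_sq_err_le I r :
  norm d (vsub (vvec n g xt d N r) (gavg n g x)) ^ 2
  <= 2 / INR N * fsum N (fun i => sqnorm d (rounding_error I r i))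
     + 2 * sqnorm d (sampling_error I).
Proof.
  rewrite norm_sq.
  rewrite (sqnorm_ext d _ (fun k => / INR N * fsum N (fun i => rounding_error I r i k)
                                    + sampling_error I k)).
  - eapply Rle_trans; [apply sqnorm_add_le|]. apply Rplus_le_compat_r.
    unfold Rdiv; rewrite Rmult_assoc. apply Rmult_le_compat_l; [lra|].
    now apply sqnorm_mean_le.
  - intros k _. unfold vsub, vvec, rounding_error, sampling_error.
    rewrite fsum_sub; ring.
Qed.

Lemma Dq_slot I i k : (k < d)%nat ->
  Dq g x xt d B b lam I (i * d + k)
  = qdist (qdelta d lam b (uvec g x xt B I i)) b (uvec g x xt B I i k).
Proof.
  intros Hk. unfold Dq.
  rewrite Nat.div_add_l, Nat.div_small, Nat.add_0_r by lia.
  rewrite Nat.add_comm, Nat.Div0.mod_add, Nat.mod_small by lia. reflexivity.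
Qed.

Lemma Dq_expectation I m : expectation (Eprod 0 m (Dq g x xt d B b lam I)).
Proof. apply Eprod_expectation; intros; apply qdist_mass. Qed.

Lemma E_rounding_error I i : (i < N)%nat ->
  Eprod 0 (N * d) (Dq g x xt d B b lam I) (fun r => sqnorm d (rounding_error I r i))
  = fsum d (fun k => Ex (qdist (qdelta d lam b (uvec g x xt B I i)) b (uvec g x xt B I i k))
                        (fun a => (a - uvec g x xt B I i k) ^ 2)).
Proof.
  intros Hi. unfold sqnorm; rewrite (expectation_fsum _ (Dq_expectation I _)).
  apply fsum_ext; intros k Hk. rewrite <- Dq_slot by exact Hk.
  apply (Eprod_marginal 0 _ (fun _ => qdist_mass _ _ _) (N * d) (i * d + k)
           (fun a => (a - uvec g x xt B I i k) ^ 2)).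
  nia.
Qed.

Lemma E_quantized_sq_err I :
  (forall i, (i < N)%nat ->
     count_out d (- 2 ^ (b - 1) * qdelta d lam b (uvec g x xt B I i))
       ((2 ^ (b - 1) - 1) * qdelta d lam b (uvec g x xt B I i)) (uvec g x xt B I i) <= dlam) ->
  Eprod 0 (N * d) (Dq g x xt d B b lam I)
    (fun r => norm d (vsub (vvec n g xt d N r) (gavg n g x)) ^ 2)
  <= 2 * quant_const d lam b dlam / INR N * fsum N (fun i => sqnorm d (uvec g x xt B I i))
     + 2 * sqnorm d (sampling_error I).
Proof.
  intros Hout. pose proof (Dq_expectation I (N * d)) as HE.
  assert (0 < INR N) by (apply lt_0_INR; lia).
  eapply Rle_trans.
  - apply (Eprod_le 0 _ _ (fun _ => True)); [constructor| |intros r _; apply (vvec_sq_err_le I)].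
    intros j aw Haw; split; [constructor|].
    apply (qdist_weights_nonneg _ b _ _ (qdelta_nonneg d lam b _ ltac:(lra) Hb) Haw).
  - rewrite (expectation_add _ HE), (expectation_const _ HE), (expectation_scal _ HE).
    rewrite (expectation_fsum _ HE). apply Rplus_le_compat_r.
    replace (2 * quant_const d lam b dlam / INR N) with (2 / INR N * quant_const d lam b dlam)
      by (field; lra).
    rewrite (Rmult_assoc (2 / INR N)), <- (fsum_scal N (quant_const d lam b dlam)).
    apply Rmult_le_compat_l; [apply Rlt_le, Rdiv_lt_0_compat; lra|].
    apply fsum_le; intros i Hi. rewrite E_rounding_error by exact Hi.
    apply qdist_sq_err_vec; auto.
Qed.

Lemma E_worker_sqnorm i : (i < N)%nat ->
  Eprod 0%nat (N * B) (fun _ => Dunif n) (fun I => sqnorm d (uvec g x xt B I i))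
  <= grad_diff_moment.
Proof.
  intros Hi.
  apply (Eprod_block_mean_sqnorm 0%nat (Dunif n) (Dunif_mass n Hn)
           (fun aw Haw => proj2 (Dunif_support n aw Haw)) (N * B) d B
           (fun a => i * B + a)%nat grad_diff HB).
  intros a Ha; nia.
Qed.

Lemma E_sampling_error :
  Eprod 0%nat (N * B) (fun _ => Dunif n) (fun I => sqnorm d (sampling_error I))
  <= / INR (N * B) * grad_diff_moment.
Proof.
  rewrite (expectation_ext _ _ (fun I => sqnorm d (fun k =>
     / INR (N * B) * fsum (N * B) (fun j => grad_diff (I j) k)
     - Ex (Dunif n) (fun c => grad_diff c k)))).
  - apply Eprod_sample_mean_sqnorm; [apply Dunif_mass, Hn|nia].
  - intros I. apply sqnorm_ext; intros k _. apply sampling_error_eq.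
Qed.

Lemma E_v_sq_err :
  (forall I : nat -> nat, (forall j, (j < N * B)%nat -> (I j < n)%nat) ->
     forall i, (i < N)%nat ->
       count_out d (- 2 ^ (b - 1) * qdelta d lam b (uvec g x xt B I i))
                   ((2 ^ (b - 1) - 1) * qdelta d lam b (uvec g x xt B I i))
                   (uvec g x xt B I i) <= dlam) ->
  Eprod 0%nat (N * B) (fun _ => Dunif n) (fun I =>
    Eprod 0 (N * d) (Dq g x xt d B b lam I) (fun r =>
      norm d (vsub (vvec n g xt d N r) (gavg n g x)) ^ 2))
  <= 2 * (quant_const d lam b dlam + / INR (N * B)) * grad_diff_moment.
Proof.
  intros Hout.
  pose proof (Eprod_expectation 0%nat (fun _ => Dunif n) (fun _ => Dunif_mass n Hn) (N * B)) as HE.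
  assert (0 < INR N) by (apply lt_0_INR; lia).
  pose proof (quant_const_nonneg d lam b dlam Hb Hdlam).
  eapply Rle_trans.
  - apply (Eprod_le 0%nat _ _ (fun c => (c < n)%nat)); [lia|apply (fun _ => Dunif_support n)|].
    intros I HI. apply E_quantized_sq_err. intros i Hi; apply Hout; auto.
  - rewrite (expectation_add _ HE), !(expectation_scal _ HE), (expectation_fsum _ HE).
    assert (Hw : fsum N (fun i => Eprod 0%nat (N * B) (fun _ => Dunif n)
                                     (fun I => sqnorm d (uvec g x xt B I i)))
                 <= INR N * grad_diff_moment).
    { rewrite <- fsum_const. apply fsum_le; intros; now apply E_worker_sqnorm. }
    pose proof E_sampling_error.
    assert (0 <= 2 * quant_const d lam b dlam / INR N)
      by (unfold Rdiv; apply Rmult_le_pos; [lra|left; apply Rinv_0_lt_compat; lra]).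
    apply Rle_trans with (2 * quant_const d lam b dlam / INR N * (INR N * grad_diff_moment)
                          + 2 * (/ INR (N * B) * grad_diff_moment)).
    + apply Rplus_le_compat; apply Rmult_le_compat_l; auto; lra.
    + right; field. split; [apply not_0_INR; nia|lra].
Qed.

Lemma vhat_eq J k : vhat n g x xt B J k - gavg n g x k
  = / INR B * fsum B (fun a => grad_diff (J a) k) - Ex (Dunif n) (fun c => grad_diff c k).
Proof. rewrite Ex_grad_diff. unfold vhat, grad_diff, vsub; ring. Qed.

Lemma E_vhat k : Eprod 0%nat B (fun _ => Dunif n) (fun J => vhat n g x xt B J k) = gavg n g x k.
Proof.
  pose proof (Eprod_expectation 0%nat (fun _ => Dunif n) (fun _ => Dunif_mass n Hn) B) as HE.
  rewrite (expectation_ext _ _ (fun J => / INR B * fsum B (fun a => grad_diff (J a) k)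
                                         + gavg n g xt k)) by (intros; reflexivity).
  rewrite (expectation_add _ HE), (expectation_scal _ HE), (expectation_fsum _ HE),
    (expectation_const _ HE).
  rewrite (fsum_ext B _ (fun _ => Ex (Dunif n) (fun c => grad_diff c k))).
  - rewrite fsum_const, Ex_grad_diff. field. apply not_0_INR; lia.
  - intros a Ha.
    apply (Eprod_marginal 0%nat _ (fun _ => Dunif_mass n Hn) B a (fun c => grad_diff c k) Ha).
Qed.

Lemma E_vhat_sq_err :
  Eprod 0%nat B (fun _ => Dunif n) (fun J => norm d (vsub (vhat n g x xt B J) (gavg n g x)) ^ 2)
  <= / INR B * grad_diff_moment.
Proof.
  rewrite (expectation_ext _ _ (fun J => sqnorm d (fun k =>
     / INR B * fsum B (fun a => grad_diff (J a) k) - Ex (Dunif n) (fun c => grad_diff c k)))).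
  - apply Eprod_sample_mean_sqnorm; [apply Dunif_mass, Hn|exact HB].
  - intros J. rewrite norm_sq. apply sqnorm_ext; intros k _. apply vhat_eq.
Qed.

Lemma E_vhat_v_sq_err_split :
  Eprod 0%nat B (fun _ => Dunif n) (fun J =>
    Eprod 0%nat (N * B) (fun _ => Dunif n) (fun I =>
      Eprod 0 (N * d) (Dq g x xt d B b lam I) (fun r =>
        norm d (vsub (vhat n g x xt B J) (vvec n g xt d N r)) ^ 2)))
  = Eprod 0%nat B (fun _ => Dunif n) (fun J => norm d (vsub (vhat n g x xt B J) (gavg n g x)) ^ 2)
    + Eprod 0%nat (N * B) (fun _ => Dunif n) (fun I =>
        Eprod 0 (N * d) (Dq g x xt d B b lam I) (fun r =>
          norm d (vsub (vvec n g xt d N r) (gavg n g x)) ^ 2)).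
Proof.
  exact (expectation_norm_sub_indep _
    (fun F => Eprod 0%nat (N * B) (fun _ => Dunif n) (fun I =>
                Eprod 0 (N * d) (Dq g x xt d B b lam I) (fun r => F (I, r))))
    d (vhat n g x xt B) (fun t => vvec n g xt d N (snd t)) (gavg n g x)
    (Eprod_expectation 0%nat _ (fun _ => Dunif_mass n Hn) B)
    (expectation_compose _ _ (Eprod_expectation 0%nat _ (fun _ => Dunif_mass n Hn) (N * B))
       (fun I => Dq_expectation I (N * d)))
    E_vhat).
Qed.

End Estimator.

Lemma inner_gavg n d g x v :
  inner d (gavg n g x) v = / INR n * fsum n (fun c => inner d (g c x) v).
Proof.
  unfold inner, gavg. rewrite fsum_swap, <- fsum_scal. apply fsum_ext; intros k _.
  rewrite Rmult_assoc, (Rmult_comm (fsum _ _)), <- fsum_scal. f_equal.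
  apply fsum_ext; intros; ring.
Qed.

Lemma grad_diff_moment_le_bregman n d f g L x xt : (1 <= n)%nat ->
  (forall i, (i < n)%nat -> convex_on (f i)) ->
  (forall i, (i < n)%nat -> has_gradient d (f i) (g i)) ->
  (forall i, (i < n)%nat -> forall y z : nat -> R,
     norm d (vsub (g i y) (g i z)) <= L * norm d (vsub y z)) ->
  grad_diff_moment n d g x xt
  <= 2 * L * (favg n f xt - favg n f x - inner d (gavg n g x) (vsub xt x)).
Proof.
  intros Hn Hconv Hgrad Hlip. unfold grad_diff_moment, favg. rewrite Ex_Dunif, inner_gavg.
  replace (2 * L * (/ INR n * fsum n (fun i => f i xt) - / INR n * fsum n (fun i => f i x)
                    - / INR n * fsum n (fun c => inner d (g c x) (vsub xt x))))
    with (/ INR n * fsum n (fun c => 2 * L * (f c xt - f c x - inner d (g c x) (vsub xt x))))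
    by (rewrite fsum_scal, !fsum_sub; ring).
  apply Rmult_le_compat_l; [left; apply Rinv_0_lt_compat, lt_0_INR; lia|].
  apply fsum_le; intros c Hc. unfold grad_diff.
  apply (lipschitz_gradient_cocoercive d (f c) (g c) (Hgrad c Hc) L (Hlip c Hc)), Hconv, Hc.
Qed.

Theorem mainTheorem7
  (n d : nat) (f : nat -> (nat -> R) -> R) (g : nat -> (nat -> R) -> (nat -> R)) (L : R)
  (Hn : (1 <= n)%nat)
  (Hconv : forall i, (i < n)%nat -> convex_on (f i))
  (Hgrad : forall i, (i < n)%nat -> has_gradient d (f i) (g i))
  (Hlip : forall i, (i < n)%nat -> forall y z : nat -> R,
            norm d (vsub (g i y) (g i z)) <= L * norm d (vsub y z))
  (x xt : nat -> R) (N B b : nat) (lam dlam : R)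
  (HN : (1 <= N)%nat) (HB : (1 <= B)%nat) (Hb : (2 <= b)%nat)
  (Hlam : 0 < lam <= 1) (Hdlam : 0 <= dlam)
  (Hout : forall I : nat -> nat, (forall j, (j < N * B)%nat -> (I j < n)%nat) ->
     forall i, (i < N)%nat ->
       count_out d (- 2 ^ (b - 1) * qdelta d lam b (uvec g x xt B I i))
                   ((2 ^ (b - 1) - 1) * qdelta d lam b (uvec g x xt B I i))
                   (uvec g x xt B I i) <= dlam) :
  let zeta := INR d * lam ^ 2 / (4 * (2 ^ (b - 1) - 1) ^ 2) + dlam * (1 - lam) ^ 2
              + 1 / (INR N * INR B) in
  let breg := favg n f xt - favg n f x - inner d (gavg n g x) (vsub xt x) in
  Eprod 0%nat (N * B) (fun _ => Dunif n) (fun I =>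
    Eprod 0 (N * d) (Dq g x xt d B b lam I) (fun r =>
      norm d (vsub (vvec n g xt d N r) (gavg n g x)) ^ 2))
  <= 4 * L * zeta * breg
  /\
  Eprod 0%nat B (fun _ => Dunif n) (fun J =>
    Eprod 0%nat (N * B) (fun _ => Dunif n) (fun I =>
      Eprod 0 (N * d) (Dq g x xt d B b lam I) (fun r =>
        norm d (vsub (vhat n g x xt B J) (vvec n g xt d N r)) ^ 2)))
  <= 4 * L * (1 / (2 * INR B) + INR d * lam ^ 2 / (4 * (2 ^ (b - 1) - 1) ^ 2)
              + dlam * (1 - lam) ^ 2 + 1 / (INR N * INR B)) * breg.
Proof.
  intros zeta breg.
  pose proof (grad_diff_moment_le_bregman n d f g L x xt Hn Hconv Hgrad Hlip) as Hmoment.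
  fold breg in Hmoment.
  pose proof (E_v_sq_err n d g x xt N B b lam dlam Hn HN HB Hb Hlam Hdlam Hout) as Hv.
  pose proof (E_vhat_sq_err n d g x xt B Hn HB) as Hvhat.
  pose proof (grid_size_ge2 b Hb).
  assert (Hzeta : zeta = quant_const d lam b dlam + / INR (N * B)).
  { unfold zeta, quant_const. rewrite mult_INR. field.
    repeat split; try (apply not_0_INR; lia); lra. }
  assert (Hzeta_bound : 2 * (quant_const d lam b dlam + / INR (N * B))
                        * grad_diff_moment n d g x xt <= 4 * L * zeta * breg).
  { assert (0 < / INR (N * B)) by (apply Rinv_0_lt_compat, lt_0_INR; nia).
    pose proof (quant_const_nonneg d lam b dlam Hb Hdlam).
    rewrite Hzeta. nra. }
  split; [exact (Rle_trans _ _ _ Hv Hzeta_bound)|].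
  rewrite E_vhat_v_sq_err_split by assumption.
  match goal with |- _ <= ?r => replace r with (/ INR B * (2 * L * breg) + 4 * L * zeta * breg) end.
  - apply Rplus_le_compat; [|exact (Rle_trans _ _ _ Hv Hzeta_bound)].
    eapply Rle_trans; [exact Hvhat|].
    apply Rmult_le_compat_l; [left; apply Rinv_0_lt_compat, lt_0_INR; lia|exact Hmoment].
  - unfold zeta. field. repeat split; try (apply not_0_INR; lia); lra.
Qed.
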